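(* A finitely generated variety of distributive double p-algebras is a discriminator variety if and only if it is generated by a finite set of simple algebras.
   Context: A distributive double p-algebra is an algebra $\langle A;\vee,\wedge,{}^*,{}^+,0,1\rangle$ whose reduct $\langle A;\vee,\wedge,0,1\rangle$ is a bounded distributive lattice and where $x\wedge y=0\iff y\le x^*$ and $x\vee y=1\iff y\ge x^+$. The ternary discriminator on a set $A$ is $\tau(x,y,z)=x$ if $x\ne y$ and $\tau(x,y,z)=z$ if $x=y$. A variety $\mathcal V$ is a discriminator variety if there is a ternary term $t$ such that $t^{\mathbf A}$ is the ternary discriminator on every subdirectly irreducible $\mathbf A\in\mathcal V$. *)

From Stdlib Require Import List.

Record alg : Type := Alg {
  car : Type;
  ajoin : car -> car -> car;
  ameet : car -> car -> car;
  astar : car -> car;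
  aplus : car -> car;
  azero : car;
  aone : car
}.

Definition ale (A : alg) (x y : car A) : Prop := ameet A x y = x.

Definition is_ddpa (A : alg) : Prop :=
  (forall x y z, ajoin A x (ajoin A y z) = ajoin A (ajoin A x y) z) /\
  (forall x y z, ameet A x (ameet A y z) = ameet A (ameet A x y) z) /\
  (forall x y, ajoin A x y = ajoin A y x) /\
  (forall x y, ameet A x y = ameet A y x) /\
  (forall x y, ajoin A x (ameet A x y) = x) /\
  (forall x y, ameet A x (ajoin A x y) = x) /\
  (forall x y z, ameet A x (ajoin A y z) = ajoin A (ameet A x y) (ameet A x z)) /\
  (forall x, ajoin A x (azero A) = x) /\
  (forall x, ameet A x (aone A) = x) /\
  (forall x y, ameet A x y = azero A <-> ale A y (astar A x)) /\
  (forall x y, ajoin A x y = aone A <-> ale A (aplus A x) y).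

Definition is_hom (A B : alg) (f : car A -> car B) : Prop :=
  (forall x y, f (ajoin A x y) = ajoin B (f x) (f y)) /\
  (forall x y, f (ameet A x y) = ameet B (f x) (f y)) /\
  (forall x, f (astar A x) = astar B (f x)) /\
  (forall x, f (aplus A x) = aplus B (f x)) /\
  f (azero A) = azero B /\
  f (aone A) = aone B.

Definition prod_alg (I : Type) (F : I -> alg) : alg :=
  {| car := forall i, car (F i);
     ajoin := fun x y i => ajoin (F i) (x i) (y i);
     ameet := fun x y i => ameet (F i) (x i) (y i);
     astar := fun x i => astar (F i) (x i);
     aplus := fun x i => aplus (F i) (x i);
     azero := fun i => azero (F i);
     aone := fun i => aone (F i) |}.

Definition aclass := alg -> Prop.

(* A variety: a class closed under homomorphic images (H), subalgebras
   (S, up to isomorphism: algebras embedding into a member) and direct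
   products (P). *)
Definition is_variety (V : aclass) : Prop :=
  (forall A B (f : car A -> car B),
      V A -> is_hom A B f -> (forall y, exists x, f x = y) -> V B) /\
  (forall A B (f : car A -> car B),
      V B -> is_hom A B f -> (forall x y, f x = f y -> x = y) -> V A) /\
  (forall (I : Type) (F : I -> alg), (forall i, V (F i)) -> V (prod_alg I F)).

Definition generated_by (K : list alg) (V : aclass) : Prop :=
  is_variety V /\ (forall A, In A K -> V A) /\
  (forall W, is_variety W -> (forall A, In A K -> W A) -> forall A, V A -> W A).

Definition finite_alg (A : alg) : Prop :=
  exists l : list (car A), forall x, In x l.

Definition finitely_generated (V : aclass) : Prop :=
  exists K : list alg, (forall A, In A K -> finite_alg A) /\ generated_by K V.

Definition is_congruence (A : alg) (th : car A -> car A -> Prop) : Prop :=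
  (forall x, th x x) /\ (forall x y, th x y -> th y x) /\
  (forall x y z, th x y -> th y z -> th x z) /\
  (forall x x' y y', th x x' -> th y y' -> th (ajoin A x y) (ajoin A x' y')) /\
  (forall x x' y y', th x x' -> th y y' -> th (ameet A x y) (ameet A x' y')) /\
  (forall x x', th x x' -> th (astar A x) (astar A x')) /\
  (forall x x', th x x' -> th (aplus A x) (aplus A x')).

(* Subdirectly irreducible: there is a pair a <> b lying in every
   non-identity congruence (the monolith is non-trivial). *)
Definition subdirectly_irreducible (A : alg) : Prop :=
  exists a b : car A, a <> b /\
    forall th, is_congruence A th -> (exists x y, x <> y /\ th x y) -> th a b.

Definition simple_alg (A : alg) : Prop :=
  (exists a b : car A, a <> b) /\
  forall th, is_congruence A th ->
    (forall x y, th x y -> x = y) \/ (forall x y, th x y).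

Inductive term (X : Type) : Type :=
| TVar : X -> term X
| TJoin : term X -> term X -> term X
| TMeet : term X -> term X -> term X
| TStar : term X -> term X
| TPlus : term X -> term X
| TZero : term X
| TOne : term X.
Arguments TVar {X}. Arguments TJoin {X}. Arguments TMeet {X}.
Arguments TStar {X}. Arguments TPlus {X}. Arguments TZero {X}. Arguments TOne {X}.

Fixpoint eval_term {X : Type} (A : alg) (env : X -> car A) (t : term X) : car A :=
  match t with
  | TVar v => env v
  | TJoin t u => ajoin A (eval_term A env t) (eval_term A env u)
  | TMeet t u => ameet A (eval_term A env t) (eval_term A env u)
  | TStar t => astar A (eval_term A env t)
  | TPlus t => aplus A (eval_term A env t)
  | TZero => azero A
  | TOne => aone A
  end.

Inductive var3 : Type := vx | vy | vz.

Definition env3 (A : alg) (x y z : car A) (v : var3) : car A :=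
  match v with vx => x | vy => y | vz => z end.

Definition is_discriminator_term (A : alg) (t : term var3) : Prop :=
  forall x y z : car A,
    (x <> y -> eval_term A (env3 A x y z) t = x) /\
    (x = y -> eval_term A (env3 A x y z) t = z).

Definition discriminator_variety (V : aclass) : Prop :=
  exists t : term var3,
    forall A, V A -> subdirectly_irreducible A -> is_discriminator_term A t.

(* (=>) A discriminator term collapses every congruence that identifies two distinct
   elements, so in a discriminator variety subdirectly irreducible means simple.  A finite
   generator A is a subdirect product of its quotients by congruences that are maximal among
   those not identifying a given pair a <> b; these quotients are subdirectly irreducible,
   hence simple members of V, and finitely many of them generate V.

   (<=) Write G x = x^+^*.  The chain x >= G x >= G^2 x >= ... becomes stationary, uniformly
   on the finite generators and hence, as an identity, on all of V, from some n on.  A fixed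
   point c of G satisfies c /\ c^+ = 0, which makes u ~ v <-> u /\ c = v /\ c a congruence, so
   in a simple algebra c is 0 or 1, and G^n x = 1 only for x = 1.  Since in a simple algebra the
   congruence u ~ v <-> (u^* = v^* and u^+ = v^+) is the identity, a term e(x, y) equal to 1 exactly
   when x and y have the same ^* and ^+ yields q(x, y) = G^n (e(x, y)), which on the simple
   generators is 1 if x = y and 0 otherwise.  So q \/ q^* = 1 and q /\ x = q /\ y hold in V;
   in a subdirectly irreducible algebra the first forces q to be 0 or 1, and then
   (q /\ z) \/ (q^* /\ x) is the discriminator. *)

From Stdlib Require Import List Lia Classical ClassicalEpsilon.
From Stdlib Require Import FunctionalExtensionality PropExtensionality ProofIrrelevance.

Notation "x ⊔ y" := (ajoin _ x y) (at level 50, left associativity).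
Notation "x ⊓ y" := (ameet _ x y) (at level 40, left associativity).
Notation "x ^*" := (astar _ x) (at level 25, left associativity, format "x ^*").
Notation "x ^+" := (aplus _ x) (at level 25, left associativity, format "x ^+").
Notation "⊥" := (azero _).
Notation "⊤" := (aone _).
Notation "x ≼ y" := (ale _ x y) (at level 70).

(** * Lattice and pseudocomplement laws *)

Section Lattice.
Context (A : alg) (HA : is_ddpa A).
Implicit Types x y z : car A.

Lemma join_assoc x y z : x ⊔ (y ⊔ z) = x ⊔ y ⊔ z.    Proof. apply HA. Qed.
Lemma meet_assoc x y z : x ⊓ (y ⊓ z) = x ⊓ y ⊓ z.    Proof. apply HA. Qed.
Lemma join_comm x y : x ⊔ y = y ⊔ x.                  Proof. apply HA. Qed.
Lemma meet_comm x y : x ⊓ y = y ⊓ x.                  Proof. apply HA. Qed.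
Lemma join_meet_absorb x y : x ⊔ (x ⊓ y) = x.         Proof. apply HA. Qed.
Lemma meet_join_absorb x y : x ⊓ (x ⊔ y) = x.         Proof. apply HA. Qed.
Lemma meet_join_distr x y z : x ⊓ (y ⊔ z) = x ⊓ y ⊔ x ⊓ z. Proof. apply HA. Qed.
Lemma join_bot x : x ⊔ ⊥ = x.                          Proof. apply HA. Qed.
Lemma meet_top x : x ⊓ ⊤ = x.                          Proof. apply HA. Qed.
Lemma meet_eq_bot x y : x ⊓ y = ⊥ <-> y ≼ x^*.         Proof. apply HA. Qed.
Lemma join_eq_top x y : x ⊔ y = ⊤ <-> x^+ ≼ y.         Proof. apply HA. Qed.

Lemma meet_idem x : x ⊓ x = x.
Proof. rewrite <- (join_meet_absorb x x) at 2. apply meet_join_absorb. Qed.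

Lemma le_refl x : x ≼ x.
Proof. apply meet_idem. Qed.

Lemma le_antisym x y : x ≼ y -> y ≼ x -> x = y.
Proof. unfold ale; intros hxy hyx. rewrite <- hxy, meet_comm. exact hyx. Qed.

Lemma le_trans x y z : x ≼ y -> y ≼ z -> x ≼ z.
Proof. unfold ale; intros hxy hyz. rewrite <- hxy, <- meet_assoc, hyz. reflexivity. Qed.

Lemma le_iff_join x y : x ≼ y <-> x ⊔ y = y.
Proof.
  unfold ale; split; intro h.
  - rewrite <- h, join_comm, meet_comm. apply join_meet_absorb.
  - rewrite <- h. apply meet_join_absorb.
Qed.

Lemma le_meet_l x y : x ⊓ y ≼ x.
Proof. unfold ale. rewrite (meet_comm x y), <- meet_assoc, meet_idem. reflexivity. Qed.

Lemma le_meet_r x y : x ⊓ y ≼ y.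
Proof. unfold ale. rewrite <- meet_assoc, meet_idem. reflexivity. Qed.

Lemma le_meet x y z : z ≼ x -> z ≼ y -> z ≼ x ⊓ y.
Proof. unfold ale; intros hx hy. rewrite meet_assoc, hx, hy. reflexivity. Qed.

Lemma le_join_l x y : x ≼ x ⊔ y.
Proof. apply meet_join_absorb. Qed.

Lemma le_join_r x y : y ≼ x ⊔ y.
Proof. rewrite join_comm. apply meet_join_absorb. Qed.

Lemma le_join x y z : x ≼ z -> y ≼ z -> x ⊔ y ≼ z.
Proof. rewrite !le_iff_join. intros hx hy. rewrite <- join_assoc, hy, hx. reflexivity. Qed.

Lemma meet_mono x y x' y' : x ≼ x' -> y ≼ y' -> x ⊓ y ≼ x' ⊓ y'.
Proof.
  intros hx hy. apply le_meet.
  - exact (le_trans _ _ _ (le_meet_l x y) hx).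
  - exact (le_trans _ _ _ (le_meet_r x y) hy).
Qed.

Lemma meet_bot x : x ⊓ ⊥ = ⊥.
Proof. rewrite <- (join_bot x) at 1. rewrite join_comm, meet_comm. apply meet_join_absorb. Qed.

Lemma bot_meet x : ⊥ ⊓ x = ⊥.
Proof. rewrite meet_comm. apply meet_bot. Qed.

Lemma top_meet x : ⊤ ⊓ x = x.
Proof. rewrite meet_comm. apply meet_top. Qed.

Lemma bot_join x : ⊥ ⊔ x = x.
Proof. rewrite join_comm. apply join_bot. Qed.

Lemma bot_le x : ⊥ ≼ x.
Proof. apply bot_meet. Qed.

Lemma le_top x : x ≼ ⊤.
Proof. apply meet_top. Qed.

Lemma le_bot_eq x : x ≼ ⊥ -> x = ⊥.
Proof. intro h. apply le_antisym; [exact h | apply bot_le]. Qed.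

Lemma top_le_eq x : ⊤ ≼ x -> x = ⊤.
Proof. intro h. apply le_antisym; [apply le_top | exact h]. Qed.

Lemma meet_eq_top x y : x ⊓ y = ⊤ -> x = ⊤ /\ y = ⊤.
Proof.
  intro h. split; apply top_le_eq; rewrite <- h; [apply le_meet_l | apply le_meet_r].
Qed.

Lemma join_meet_distr x y z : x ⊔ (y ⊓ z) = (x ⊔ y) ⊓ (x ⊔ z).
Proof.
  rewrite (meet_join_distr (x ⊔ y) x z), (meet_comm (x ⊔ y) x), meet_join_absorb.
  rewrite (meet_comm (x ⊔ y) z), meet_join_distr, join_assoc.
  rewrite (meet_comm z x), join_meet_absorb, (meet_comm z y). reflexivity.
Qed.

End Lattice.

Definition dual (A : alg) : alg :=
  Alg (car A) (ameet A) (ajoin A) (aplus A) (astar A) (aone A) (azero A).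

Section Duality.
Context (A : alg) (HA : is_ddpa A).
Implicit Types x y z : car A.

Lemma ale_dual x y : ale (dual A) x y <-> y ≼ x.
Proof. unfold ale at 1; simpl. rewrite (le_iff_join A HA), (join_comm A HA). tauto. Qed.

Lemma dual_ddpa : is_ddpa (dual A).
Proof.
  repeat split; simpl; intros.
  - apply meet_assoc; auto.
  - apply join_assoc; auto.
  - apply meet_comm; auto.
  - apply join_comm; auto.
  - apply meet_join_absorb; auto.
  - apply join_meet_absorb; auto.
  - apply join_meet_distr; auto.
  - apply meet_top; auto.
  - apply join_bot; auto.
  - apply ale_dual, join_eq_top; auto.
  - apply join_eq_top, ale_dual; auto.
  - apply ale_dual, meet_eq_bot; auto.
  - apply meet_eq_bot, ale_dual; auto.
Qed.

End Duality.

Section PseudoComplement.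
Context (A : alg) (HA : is_ddpa A).
Implicit Types x y z : car A.

Lemma meet_star x : x ⊓ x^* = ⊥.
Proof. apply (meet_eq_bot A HA), (le_refl A HA). Qed.

Lemma le_star_star x : x ≼ x^*^*.
Proof. apply (meet_eq_bot A HA). rewrite (meet_comm A HA). apply meet_star. Qed.

Lemma star_antitone x y : x ≼ y -> y^* ≼ x^*.
Proof.
  intro h. apply (meet_eq_bot A HA), (le_bot_eq A HA).
  rewrite <- (meet_star y). apply (meet_mono A HA); [exact h | apply (le_refl A HA)].
Qed.

Lemma star3 x : x^*^*^* = x^*.
Proof.
  apply (le_antisym A HA).
  - apply star_antitone, le_star_star.
  - apply le_star_star.
Qed.

Lemma star_bot : (azero A)^* = ⊤.
Proof. apply (top_le_eq A HA), (meet_eq_bot A HA), (bot_meet A HA). Qed.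

Lemma star_top : (aone A)^* = ⊥.
Proof. rewrite <- (top_meet A HA ((aone A)^*)). apply meet_star. Qed.

Lemma star_eq_top x : x^* = ⊤ -> x = ⊥.
Proof. intro h. rewrite <- (meet_top A HA x), <- h. apply meet_star. Qed.

Lemma star_join x y : (x ⊔ y)^* = x^* ⊓ y^*.
Proof.
  apply (le_antisym A HA).
  - apply (le_meet A HA); apply star_antitone; [apply (le_join_l A HA) | apply (le_join_r A HA)].
  - apply (meet_eq_bot A HA). rewrite (meet_comm A HA), (meet_join_distr A HA).
    apply (le_bot_eq A HA), (le_join A HA).
    + rewrite <- (meet_star x), (meet_comm A HA x).
      apply (meet_mono A HA); [apply (le_meet_l A HA) | apply (le_refl A HA)].
    + rewrite <- (meet_star y), (meet_comm A HA y).
      apply (meet_mono A HA); [apply (le_meet_r A HA) | apply (le_refl A HA)].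
Qed.

Lemma meet_eq_bot_star_star x y : x ⊓ y = ⊥ <-> x ⊓ y^*^* = ⊥.
Proof.
  rewrite (meet_comm A HA x y), (meet_comm A HA x), !(meet_eq_bot A HA), star3. tauto.
Qed.

Lemma star_meet x y : (x ⊓ y)^* = (x^*^* ⊓ y^*^*)^*.
Proof.
  assert (H : forall z, z ⊓ (x ⊓ y) = ⊥ <-> z ⊓ (x^*^* ⊓ y^*^*) = ⊥).
  { intro z. rewrite !(meet_assoc A HA), (meet_eq_bot_star_star (z ⊓ x) y).
    rewrite <- !(meet_assoc A HA), (meet_comm A HA x), (meet_comm A HA (x^*^*)), !(meet_assoc A HA).
    apply meet_eq_bot_star_star. }
  apply (le_antisym A HA); apply (meet_eq_bot A HA); rewrite (meet_comm A HA).
  - apply H. rewrite (meet_comm A HA). apply meet_star.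
  - apply H. rewrite (meet_comm A HA). apply meet_star.
Qed.

Lemma star_le_of_meet_bot x y : x^* ⊓ y^*^* = ⊥ -> x^* ≼ y^*.
Proof. rewrite (meet_comm A HA), (meet_eq_bot A HA), star3. tauto. Qed.

End PseudoComplement.

Section DualPseudoComplement.
Context (A : alg) (HA : is_ddpa A).
Implicit Types x y : car A.

Lemma join_plus x : x ⊔ x^+ = ⊤.
Proof. exact (meet_star (dual A) (dual_ddpa A HA) x). Qed.

Lemma plus_top : (aone A)^+ = ⊥.
Proof. exact (star_bot (dual A) (dual_ddpa A HA)). Qed.

Lemma plus_meet x y : (x ⊓ y)^+ = x^+ ⊔ y^+.
Proof. exact (star_join (dual A) (dual_ddpa A HA) x y). Qed.

Lemma plus_join x y : (x ⊔ y)^+ = (x^+^+ ⊔ y^+^+)^+.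
Proof. exact (star_meet (dual A) (dual_ddpa A HA) x y). Qed.

Lemma plus_le_of_join_top x y : x^+ ⊔ y^+^+ = ⊤ -> y^+ ≼ x^+.
Proof.
  intro h. apply (ale_dual A HA).
  exact (star_le_of_meet_bot (dual A) (dual_ddpa A HA) x y h).
Qed.

End DualPseudoComplement.

(** * Terms and equational classes *)

Section Identities.
Context {X : Type}.
Implicit Types s t u : term X.

Lemma eval_term_hom (A B : alg) (f : car A -> car B) (env : X -> car A) t :
  is_hom A B f -> f (eval_term A env t) = eval_term B (fun v => f (env v)) t.
Proof. intros (hj & hm & hs & hp & h0 & h1). induction t; simpl; congruence. Qed.

Lemma eval_term_congruence (A : alg) (th : car A -> car A -> Prop) (e1 e2 : X -> car A) t :
  is_congruence A th -> (forall v, th (e1 v) (e2 v)) ->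
  th (eval_term A e1 t) (eval_term A e2 t).
Proof. intros (hr & _ & _ & hj & hm & hs & hp) he. induction t; simpl; auto. Qed.

Lemma eval_term_prod (I : Type) (F : I -> alg) (env : X -> car (prod_alg I F)) t i :
  eval_term (prod_alg I F) env t i = eval_term (F i) (fun v => env v i) t.
Proof. induction t; simpl; congruence. Qed.

Definition satisfies s u (A : alg) : Prop :=
  forall env : X -> car A, eval_term A env s = eval_term A env u.

Lemma satisfies_variety s u : is_variety (satisfies s u).
Proof.
  split; [|split].
  - intros A B f hA hf hsurj env.
    set (sec := fun v => proj1_sig (constructive_indefinite_description _ (hsurj (env v)))).
    assert (henv : env = fun v => f (sec v)).
    { apply functional_extensionality. intro v. unfold sec.
      destruct (constructive_indefinite_description _ _). auto. }
    rewrite henv.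
    rewrite <- !eval_term_hom by exact hf. rewrite hA. reflexivity.
  - intros A B f hB hf hinj env. apply hinj. rewrite !eval_term_hom by exact hf. apply hB.
  - intros I F hF env. apply functional_extensionality_dep. intro i.
    rewrite !eval_term_prod. apply hF.
Qed.

Lemma generated_by_satisfies (L : list alg) (V : aclass) s u :
  generated_by L V -> (forall B, In B L -> satisfies s u B) ->
  forall A, V A -> satisfies s u A.
Proof. intros (_ & _ & hmin). exact (hmin _ (satisfies_variety s u)). Qed.

End Identities.

(** * Quotients and maximal congruences *)

Section Quotient.
Context (A : alg) (th : car A -> car A -> Prop).

Definition qcar : Type := { P : car A -> Prop | exists x, P = th x }.

Definition qproj (x : car A) : qcar := exist _ (th x) (ex_intro _ x eq_refl).

Definition qrepr (u : qcar) : car A := epsilon (inhabits (azero A)) (proj1_sig u).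

Definition quot : alg :=
  {| car := qcar;
     ajoin := fun u v => qproj (qrepr u ⊔ qrepr v);
     ameet := fun u v => qproj (qrepr u ⊓ qrepr v);
     astar := fun u => qproj ((qrepr u)^*);
     aplus := fun u => qproj ((qrepr u)^+);
     azero := qproj ⊥;
     aone := qproj ⊤ |}.

Lemma qproj_surj (u : qcar) : exists x, qproj x = u.
Proof. destruct u as [P [x ->]]. exists x. reflexivity. Qed.

Hypothesis Hth : is_congruence A th.

Lemma qproj_eq x y : th x y -> qproj x = qproj y.
Proof.
  destruct Hth as (_ & hsym & htrans & _). intro h. apply subset_eq_compat.
  apply functional_extensionality. intro z. apply propositional_extensionality.
  split; eauto.
Qed.

Lemma qproj_inj x y : qproj x = qproj y -> th x y.
Proof.
  intro h. apply (f_equal (@proj1_sig _ _)) in h. simpl in h. rewrite h. apply (proj1 Hth).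
Qed.

Lemma qrepr_qproj x : th x (qrepr (qproj x)).
Proof. unfold qrepr. apply epsilon_spec. exists x. apply (proj1 Hth). Qed.

Lemma qproj_hom : is_hom A quot qproj.
Proof.
  destruct Hth as (hr & hs & ht & hj & hm & hst & hp).
  repeat split; intros; simpl; apply qproj_eq;
    repeat first [apply hj | apply hm | apply hst | apply hp | apply qrepr_qproj].
Qed.

End Quotient.

Definition classic_bool (P : Prop) : bool :=
  if excluded_middle_informative P then true else false.

Lemma classic_bool_true (P : Prop) : classic_bool P = true <-> P.
Proof. unfold classic_bool. destruct (excluded_middle_informative P); intuition discriminate. Qed.

Lemma classic_bool_false (P : Prop) : classic_bool P = false <-> ~ P.
Proof. unfold classic_bool. destruct (excluded_middle_informative P); intuition discriminate. Qed.

Lemma filter_length_mono {T} (f g : T -> bool) (l : list T) :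
  (forall p, In p l -> f p = true -> g p = true) ->
  length (filter f l) <= length (filter g l).
Proof.
  induction l as [|p l IH]; simpl; intro h; [lia|].
  destruct (f p) eqn:ef.
  - rewrite (h p (or_introl eq_refl) ef). simpl.
    specialize (IH (fun q hq => h q (or_intror hq))). lia.
  - specialize (IH (fun q hq => h q (or_intror hq))). destruct (g p); simpl; lia.
Qed.

Lemma filter_length_lt {T} (f g : T -> bool) (l : list T) (q : T) :
  (forall p, In p l -> f p = true -> g p = true) -> In q l -> f q = false -> g q = true ->
  length (filter f l) < length (filter g l).
Proof.
  induction l as [|p l IH]; simpl; intros h hq hf hg; [contradiction|].
  pose proof (filter_length_mono f g l (fun r hr => h r (or_intror hr))) as hmono.
  destruct hq as [<- | hq].
  - rewrite hf, hg. simpl. lia.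
  - specialize (IH (fun r hr => h r (or_intror hr)) hq hf hg).
    destruct (f p) eqn:ef.
    + rewrite (h p (or_introl eq_refl) ef). simpl. lia.
    + destruct (g p); simpl; lia.
Qed.

Lemma eq_congruence (A : alg) : is_congruence A eq.
Proof. repeat split; intros; subst; auto. Qed.

Definition max_avoiding (A : alg) (a b : car A) (th : car A -> car A -> Prop) : Prop :=
  is_congruence A th /\ ~ th a b /\
  forall psi, is_congruence A psi -> (forall x y, th x y -> psi x y) ->
    psi a b \/ (forall x y, psi x y -> th x y).

Lemma max_avoiding_exists (A : alg) (a b : car A) :
  finite_alg A -> a <> b -> exists th, max_avoiding A a b th.
Proof.
  intros [l hl] hab.
  set (pairs := list_prod l l).
  set (size := fun th : car A -> car A -> Prop =>
    length (filter (fun p => classic_bool (th (fst p) (snd p))) pairs)).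
  assert (hbound : forall th, size th <= length pairs).
  { intro th. unfold size. rewrite <- (filter_true pairs) at 2.
    apply filter_length_mono. auto. }
  (* Enlarge th as long as possible: each step relates strictly more pairs of elements of l. *)
  enough (hind : forall k th, is_congruence A th -> ~ th a b -> length pairs - size th < k ->
            exists th', max_avoiding A a b th').
  { apply (hind (S (length pairs)) eq (eq_congruence A) hab). lia. }
  induction k as [|k IH]; intros th hth hthab hk; [lia|].
  destruct (classic (max_avoiding A a b th)) as [hmax | hnmax]; [eauto|].
  assert (hbig : exists psi x y, is_congruence A psi /\ (forall x y, th x y -> psi x y) /\
                   ~ psi a b /\ psi x y /\ ~ th x y).
  { apply NNPP. intro hno. apply hnmax. split; [exact hth|]. split; [exact hthab|].
    intros psi hpsi hsub. destruct (classic (psi a b)) as [hab' | hab']; [now left|right].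
    intros x y hxy. apply NNPP. intro hthxy. apply hno. now exists psi, x, y. }
  destruct hbig as (psi & x & y & hpsi & hsub & hpsiab & hpsixy & hthxy).
  apply (IH psi hpsi hpsiab).
  assert (size th < size psi).
  { apply (filter_length_lt _ _ _ (x, y)).
    - intros p _ hp. apply classic_bool_true. apply hsub. now apply classic_bool_true.
    - apply in_prod; auto.
    - now apply classic_bool_false.
    - now apply classic_bool_true. }
  specialize (hbound psi). lia.
Qed.

Lemma congruence_pullback (A B : alg) (f : car A -> car B) (psi : car B -> car B -> Prop) :
  is_hom A B f -> is_congruence B psi -> is_congruence A (fun x y => psi (f x) (f y)).
Proof.
  intros (hj & hm & hs & hp & _) (r & sym & t & cj & cm & cs & cp).
  repeat split; intros.
  - apply r.
  - apply sym; auto.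
  - eapply t; eauto.
  - rewrite !hj. apply cj; auto.
  - rewrite !hm. apply cm; auto.
  - rewrite !hs. apply cs; auto.
  - rewrite !hp. apply cp; auto.
Qed.

(* A nontrivial congruence of the quotient pulls back to a congruence of A properly
   containing th, so by maximality it identifies a and b. *)
Lemma quot_max_avoiding_si (A : alg) (a b : car A) th :
  max_avoiding A a b th -> subdirectly_irreducible (quot A th).
Proof.
  intros (hth & hab & hmax).
  exists (qproj A th a), (qproj A th b). split.
  - intro e. apply hab. exact (qproj_inj A th hth a b e).
  - intros psi hpsi [u [v [huv hp]]].
    set (pull := fun x y => psi (qproj A th x) (qproj A th y)).
    pose proof (congruence_pullback _ _ _ _ (qproj_hom A th hth) hpsi) as hpull.
    destruct (hmax pull hpull) as [h | h].
    + intros x y hxy. unfold pull. rewrite (qproj_eq A th hth x y hxy). apply (proj1 hpsi).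
    + exact h.
    + exfalso. destruct (qproj_surj A th u) as [x <-]. destruct (qproj_surj A th v) as [y <-].
      apply huv, (qproj_eq A th hth), h, hp.
Qed.

Lemma discriminator_si_simple (A : alg) (t : term var3) :
  is_discriminator_term A t -> subdirectly_irreducible A -> simple_alg A.
Proof.
  intros hd [a [b [hab _]]]. split; [now exists a, b|].
  intros psi hpsi.
  destruct (classic (exists x y, x <> y /\ psi x y)) as [[x [y [hxy hp]]] | hno].
  - right.
    assert (hx : forall u, psi x u).
    { intro u.
      assert (h : psi (eval_term A (env3 A x y u) t) (eval_term A (env3 A x x u) t)).
      { apply eval_term_congruence; [exact hpsi|].
        destruct hpsi as (hr & hs & _). intros []; simpl; auto. }
      rewrite (proj1 (hd x y u) hxy), (proj2 (hd x x u) eq_refl) in h. exact h. }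
    destruct hpsi as (_ & hs & htr & _). intros u v. eapply htr; [apply hs, hx | apply hx].
  - left. intros x y h. apply NNPP. intro ne. apply hno. now exists x, y.
Qed.

Lemma variety_subdirect (W : aclass) (A : alg) (I : Type) (th : I -> car A -> car A -> Prop) :
  is_variety W -> (forall i, is_congruence A (th i)) -> (forall i, W (quot A (th i))) ->
  (forall x y, (forall i, th i x y) -> x = y) -> W A.
Proof.
  intros (_ & hS & hP) hth hW hsep.
  apply (hS A (prod_alg I (fun i => quot A (th i))) (fun x i => qproj A (th i) x)).
  - exact (hP _ _ hW).
  - repeat split; intros; apply functional_extensionality_dep; intro i;
      apply (qproj_hom A (th i) (hth i)).
  - intros x y e. apply hsep. intro i. apply (qproj_inj A (th i) (hth i)).
    exact (f_equal (fun g => g i) e).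
Qed.

Lemma finite_in_variety_of_simples (V : aclass) (t : term var3) :
  is_variety V -> (forall A, V A -> subdirectly_irreducible A -> is_discriminator_term A t) ->
  forall A, V A -> finite_alg A ->
  exists L : list alg, (forall B, In B L -> V B /\ simple_alg B) /\
    (forall W, is_variety W -> (forall B, In B L -> W B) -> W A).
Proof.
  intros hV hdisc A hA hfin. pose proof hfin as [l hl].
  assert (hsel : forall p : car A * car A, exists th,
             fst p <> snd p -> max_avoiding A (fst p) (snd p) th).
  { intro p. destruct (classic (fst p = snd p)) as [e | ne].
    - exists eq. contradiction.
    - destruct (max_avoiding_exists A _ _ hfin ne) as [th hth]. eauto. }
  set (sel := fun p => proj1_sig (constructive_indefinite_description _ (hsel p))).
  assert (hsel_spec : forall p, fst p <> snd p -> max_avoiding A (fst p) (snd p) (sel p)).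
  { intro p. unfold sel. destruct (constructive_indefinite_description _ _). auto. }
  exists (map (fun p => quot A (sel p))
            (filter (fun p => classic_bool (fst p <> snd p)) (list_prod l l))).
  split.
  - intros B hB. apply in_map_iff in hB. destruct hB as [p [<- hp]].
    apply filter_In in hp. destruct hp as [_ hp]. rewrite classic_bool_true in hp.
    pose proof (hsel_spec p hp) as hmax.
    pose proof (quot_max_avoiding_si A _ _ _ hmax) as hsi.
    assert (hVq : V (quot A (sel p))).
    { apply (proj1 hV) with A (qproj A (sel p));
        [exact hA | apply qproj_hom, hmax | apply qproj_surj]. }
    split; [exact hVq|].
    exact (discriminator_si_simple _ t (hdisc _ hVq hsi) hsi).
  - intros W hW hWL.
    apply (variety_subdirect W A {p : car A * car A | fst p <> snd p} (fun i => sel (proj1_sig i)));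
      auto.
    + intro i. apply (hsel_spec _ (proj2_sig i)).
    + intro i. apply hWL, in_map_iff. exists (proj1_sig i). split; [reflexivity|].
      apply filter_In. split.
      * destruct (proj1_sig i) as [x y]. apply in_prod; auto.
      * apply classic_bool_true, (proj2_sig i).
    + intros x y hxy. apply NNPP. intro ne.
      apply (hsel_spec (x, y) ne), (hxy (exist _ (x, y) ne)).
Qed.

Lemma discriminator_generated_by_simples (V : aclass) :
  is_variety V -> finitely_generated V -> discriminator_variety V ->
  exists L : list alg, (forall A, In A L -> simple_alg A) /\ generated_by L V.
Proof.
  intros hV [K [hKfin hK]] [t ht].
  destruct hK as (_ & hKV & hKmin).
  assert (hcover : exists L, (forall B, In B L -> V B /\ simple_alg B) /\
            forall W, is_variety W -> (forall B, In B L -> W B) -> forall A, In A K -> W A).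
  { clear hKmin. induction K as [|A K IH].
    - exists nil. split; intros; contradiction.
    - destruct IH as [L [hL hLK]];
        [intros; apply hKfin, in_cons; auto | intros; apply hKV, in_cons; auto |].
      destruct (finite_in_variety_of_simples V t hV ht A (hKV A (in_eq A K)) (hKfin A (in_eq A K)))
        as [LA [hLA hLAA]].
      exists (LA ++ L). split.
      + intros B hB. apply in_app_or in hB. destruct hB; auto.
      + intros W hW hWB A' [<- | hA'].
        * apply hLAA; auto. intros; apply hWB, in_or_app; auto.
        * apply (hLK W hW); auto. intros; apply hWB, in_or_app; auto. }
  destruct hcover as [L [hL hLK]].
  exists L. split; [intros; apply hL; auto|].
  split; [exact hV|]. split; [intros; apply hL; auto|].
  intros W hW hWL. apply hKmin; auto. exact (hLK W hW hWL).
Qed.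

(** * Two congruences of a double p-algebra *)

Definition meet_kernel (A : alg) (d : car A) (u v : car A) : Prop := u ⊓ d = v ⊓ d.

Definition sp_kernel (A : alg) (u v : car A) : Prop := u^* = v^* /\ u^+ = v^+.

Section Kernels.
Context (A : alg) (HA : is_ddpa A).
Implicit Types d u v w : car A.

Lemma meet_meet_distr u w d : u ⊓ w ⊓ d = (u ⊓ d) ⊓ (w ⊓ d).
Proof.
  rewrite (meet_assoc A HA (u ⊓ d) w d), <- (meet_assoc A HA u d w), (meet_comm A HA d w),
    (meet_assoc A HA u w d), <- (meet_assoc A HA (u ⊓ w) d d), (meet_idem A HA). reflexivity.
Qed.

Lemma star_meet_kernel u d : u^* ⊓ d = (u ⊓ d)^* ⊓ d.
Proof.
  apply (le_antisym A HA).
  - apply (meet_mono A HA); [apply star_antitone, le_meet_l; exact HA | apply (le_refl A HA)].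
  - apply (le_meet A HA); [|apply (le_meet_r A HA)].
    apply (meet_eq_bot A HA). rewrite (meet_comm A HA ((u ⊓ d)^*) d), (meet_assoc A HA).
    apply (meet_star A HA).
Qed.

Lemma plus_meet_kernel u d : d ⊓ d^+ = ⊥ -> u^+ ⊓ d = (u ⊓ d)^+ ⊓ d.
Proof.
  intro hd. rewrite (plus_meet A HA), !(meet_comm A HA _ d), (meet_join_distr A HA d), hd.
  rewrite (join_bot A HA). reflexivity.
Qed.

Lemma meet_kernel_congruence d : d ⊓ d^+ = ⊥ -> is_congruence A (meet_kernel A d).
Proof.
  intro hd. unfold meet_kernel. repeat split.
  - intros u v h. auto.
  - intros u v w h1 h2. congruence.
  - intros u u' v v' h1 h2.
    rewrite !(meet_comm A HA _ d), !(meet_join_distr A HA), !(meet_comm A HA d), h1, h2.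
    reflexivity.
  - intros u u' v v' h1 h2. rewrite (meet_meet_distr u), (meet_meet_distr u'), h1, h2. reflexivity.
  - intros u u' h. rewrite (star_meet_kernel u), (star_meet_kernel u'), h. reflexivity.
  - intros u u' h. rewrite (plus_meet_kernel u), (plus_meet_kernel u'), h by exact hd. reflexivity.
Qed.

Lemma sp_kernel_congruence : is_congruence A (sp_kernel A).
Proof.
  unfold sp_kernel. repeat split; intros;
    repeat match goal with h : _ /\ _ |- _ => destruct h end; try congruence.
  - rewrite !(star_join A HA). congruence.
  - rewrite (plus_join A HA x), (plus_join A HA x'). congruence.
  - rewrite (star_meet A HA x), (star_meet A HA x'). congruence.
  - rewrite !(plus_meet A HA). congruence.
Qed.

End Kernels.

Section SimpleAlgebras.
Context (A : alg) (HA : is_ddpa A).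
Implicit Types c d x y : car A.

Lemma meet_kernel_self_top d : meet_kernel A d d ⊤.
Proof. unfold meet_kernel. rewrite (meet_idem A HA), (top_meet A HA). reflexivity. Qed.

Lemma meet_plus_of_complement x y : x ⊔ y = ⊤ -> x ⊓ y = ⊥ -> x ⊓ x^+ = ⊥.
Proof.
  intros hj hm. apply (le_bot_eq A HA). rewrite <- hm.
  apply (meet_mono A HA); [apply (le_refl A HA) | apply (join_eq_top A HA), hj].
Qed.

Lemma simple_meet_kernel d : simple_alg A -> d ⊓ d^+ = ⊥ -> d = ⊥ \/ d = ⊤.
Proof.
  intros [_ hs] hd. destruct (hs _ (meet_kernel_congruence A HA d hd)) as [hid | htot].
  - right. apply hid, meet_kernel_self_top.
  - left. specialize (htot ⊥ ⊤). unfold meet_kernel in htot.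
    rewrite (bot_meet A HA), (top_meet A HA) in htot. auto.
Qed.

Lemma simple_sp_kernel x y : simple_alg A -> x^* = y^* -> x^+ = y^+ -> x = y.
Proof.
  intros [[a [b hab]] hs] hstar hplus.
  destruct (hs _ (sp_kernel_congruence A HA)) as [hid | htot].
  - apply hid. split; auto.
  - exfalso. destruct (htot ⊥ ⊤) as [e _]. rewrite (star_bot A HA), (star_top A HA) in e.
    apply hab. rewrite <- (meet_top A HA a), <- (meet_top A HA b), e, !(meet_bot A HA).
    reflexivity.
Qed.

Lemma si_star_complemented c : subdirectly_irreducible A -> c ⊔ c^* = ⊤ -> c = ⊥ \/ c = ⊤.
Proof.
  intros (a & b & hab & hmono) hc.
  assert (htop_or_ab : forall d, d ⊓ d^+ = ⊥ -> d = ⊤ \/ meet_kernel A d a b).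
  { intros d hd. destruct (classic (d = ⊤)) as [e | ne]; [now left | right].
    apply hmono; [now apply meet_kernel_congruence|].
    exists d, ⊤. split; [exact ne | apply meet_kernel_self_top]. }
  destruct (htop_or_ab c) as [e | hca]; [|now right|].
  { apply (meet_plus_of_complement c (c^*)); [exact hc | apply (meet_star A HA)]. }
  destruct (htop_or_ab (c^*)) as [e | hcsa]; [| left; now apply (star_eq_top A HA) |].
  { apply (meet_plus_of_complement (c^*) c).
    - rewrite (join_comm A HA). exact hc.
    - rewrite (meet_comm A HA). apply (meet_star A HA). }
  exfalso. apply hab. unfold meet_kernel in hca, hcsa.
  rewrite <- (meet_top A HA a), <- (meet_top A HA b), <- hc, !(meet_join_distr A HA).
  rewrite hca, hcsa. reflexivity.
Qed.

End SimpleAlgebras.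

(** * The discriminator term *)

Fixpoint plus_star_iter (A : alg) (n : nat) (x : car A) : car A :=
  match n with 0 => x | S k => (plus_star_iter A k x)^+^* end.

Fixpoint plus_star_iter_term {X} (n : nat) (t : term X) : term X :=
  match n with 0 => t | S k => TStar (TPlus (plus_star_iter_term k t)) end.

Lemma eval_plus_star_iter_term {X} (A : alg) (env : X -> car A) n t :
  eval_term A env (plus_star_iter_term n t) = plus_star_iter A n (eval_term A env t).
Proof. induction n; simpl; congruence. Qed.

Definition plus_star_stable (A : alg) (n : nat) : Prop :=
  forall x : car A, plus_star_iter A n x = plus_star_iter A (S n) x.

Lemma plus_star_iter_stable_mono (A : alg) n m (x : car A) :
  plus_star_iter A n x = plus_star_iter A (S n) x -> n <= m ->
  plus_star_iter A m x = plus_star_iter A (S m) x.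
Proof. intro h. induction 1; [exact h | simpl in *; congruence]. Qed.

Section Iteration.
Context (A : alg) (HA : is_ddpa A).
Implicit Types x : car A.

Lemma plus_star_le x : x^+^* ≼ x.
Proof.
  unfold ale. rewrite <- (join_bot A HA (x^+^* ⊓ x)), <- (meet_star A HA (x^+)).
  rewrite (meet_comm A HA (x^+) _), <- (meet_join_distr A HA), (join_plus A HA), (meet_top A HA).
  reflexivity.
Qed.

Lemma plus_star_iter_le n x : plus_star_iter A n x ≼ x.
Proof.
  induction n; simpl; [apply (le_refl A HA)|].
  exact (le_trans A HA _ _ _ (plus_star_le _) IHn).
Qed.

Lemma plus_star_iter_antitone i j x : i <= j -> plus_star_iter A j x ≼ plus_star_iter A i x.
Proof.
  induction 1; [apply (le_refl A HA)|].
  exact (le_trans A HA _ _ _ (plus_star_le _) IHle).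
Qed.

Lemma plus_star_iter_top n : plus_star_iter A n ⊤ = ⊤.
Proof. induction n; simpl; [reflexivity|]. rewrite IHn, (plus_top A HA). apply (star_bot A HA). Qed.

(* If the chain did not stabilise before step |l|, its first |l| + 1 terms would be distinct
   elements of A. *)
Lemma plus_star_iter_stable_finite (l : list (car A)) x :
  (forall y, In y l) -> plus_star_iter A (length l) x = plus_star_iter A (S (length l)) x.
Proof.
  intro hl.
  destruct (classic (exists i, i <= length l /\ plus_star_iter A i x = plus_star_iter A (S i) x))
    as [[i [hi e]] | hno].
  { exact (plus_star_iter_stable_mono A i _ x e hi). }
  exfalso.
  assert (hlt : forall p q, p < q -> q <= length l -> plus_star_iter A p x <> plus_star_iter A q x).
  { intros p q hpq hq e. apply hno. exists p. split; [lia|].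
    apply (le_antisym A HA); [|apply plus_star_le].
    rewrite e. apply plus_star_iter_antitone. lia. }
  assert (hnodup : NoDup (map (fun k => plus_star_iter A k x) (seq 0 (S (length l))))).
  { apply NoDup_map_NoDup_ForallPairs; [|apply seq_NoDup].
    intros p q hp hq e. apply in_seq in hp, hq.
    destruct (PeanoNat.Nat.lt_trichotomy p q) as [lt | [eq | gt]]; [| exact eq |].
    - exfalso. exact (hlt p q lt ltac:(lia) e).
    - exfalso. exact (hlt q p gt ltac:(lia) (eq_sym e)). }
  apply NoDup_incl_length with (l' := l) in hnodup; [|intros y _; apply hl].
  rewrite length_map, length_seq in hnodup. lia.
Qed.

End Iteration.

Lemma plus_star_iter_stable_variety (V : aclass) :
  (forall A, V A -> is_ddpa A) -> finitely_generated V ->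
  exists n, forall A, V A -> plus_star_stable A n.
Proof.
  intros hd [K [hKfin hK]].
  assert (hKstable : exists n, forall A, In A K -> plus_star_stable A n).
  { assert (hKd : forall A, In A K -> is_ddpa A) by (intros; apply hd, (proj1 (proj2 hK)); auto).
    clear hK. induction K as [|B K IH].
    - exists 0. intros A [].
    - destruct IH as [n hn];
        [intros; apply hKfin, in_cons; auto | intros; apply hKd, in_cons; auto |].
      destruct (hKfin B (in_eq B K)) as [l hl].
      exists (n + length l). intros A [<- | hA] x.
      + apply (plus_star_iter_stable_mono B (length l)); [|lia].
        apply plus_star_iter_stable_finite; [apply hKd, in_eq | exact hl].
      + apply (plus_star_iter_stable_mono A n); [apply hn; auto | lia]. }
  destruct hKstable as [n hn]. exists n. intros A hA x.
  assert (hsat : forall B, In B K ->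
            satisfies (plus_star_iter_term n (TVar tt)) (plus_star_iter_term (S n) (TVar tt)) B).
  { intros B hB env. rewrite !eval_plus_star_iter_term. apply hn, hB. }
  specialize (generated_by_satisfies K V _ _ hK hsat A hA (fun _ => x)).
  rewrite !eval_plus_star_iter_term. auto.
Qed.

Definition sp_agree (A : alg) (x y : car A) : car A :=
  (x^* ⊓ y^*^*)^* ⊓ (y^* ⊓ x^*^*)^* ⊓ ((x^+ ⊔ y^+^+) ⊓ (y^+ ⊔ x^+^+)).

Definition eq_indicator (A : alg) (n : nat) (x y : car A) : car A :=
  plus_star_iter A n (sp_agree A x y).

Definition eq_indicator_term {X} (n : nat) (s t : term X) : term X :=
  plus_star_iter_term n
    (TMeet (TMeet (TStar (TMeet (TStar s) (TStar (TStar t))))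
                  (TStar (TMeet (TStar t) (TStar (TStar s)))))
           (TMeet (TJoin (TPlus s) (TPlus (TPlus t)))
                  (TJoin (TPlus t) (TPlus (TPlus s))))).

Definition disc_term (n : nat) : term var3 :=
  TJoin (TMeet (eq_indicator_term n (TVar vx) (TVar vy)) (TVar vz))
        (TMeet (TStar (eq_indicator_term n (TVar vx) (TVar vy))) (TVar vx)).

Lemma eval_eq_indicator_term {X} (A : alg) (env : X -> car A) n s t :
  eval_term A env (eq_indicator_term n s t)
  = eq_indicator A n (eval_term A env s) (eval_term A env t).
Proof. unfold eq_indicator_term, eq_indicator. rewrite eval_plus_star_iter_term. reflexivity. Qed.

Section Indicator.
Context (A : alg) (HA : is_ddpa A).
Implicit Types x y : car A.

Lemma sp_agree_refl x : sp_agree A x x = ⊤.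
Proof.
  unfold sp_agree. rewrite (meet_star A HA (x^*)), (star_bot A HA), (join_plus A HA (x^+)).
  rewrite !(meet_top A HA). reflexivity.
Qed.

Lemma sp_agree_top x y : sp_agree A x y = ⊤ -> x^* = y^* /\ x^+ = y^+.
Proof.
  unfold sp_agree. intro h.
  destruct (meet_eq_top A HA _ _ h) as [hs hp].
  destruct (meet_eq_top A HA _ _ hs) as [hxy hyx].
  destruct (meet_eq_top A HA _ _ hp) as [hpxy hpyx].
  split; apply (le_antisym A HA).
  - apply (star_le_of_meet_bot A HA), (star_eq_top A HA), hxy.
  - apply (star_le_of_meet_bot A HA), (star_eq_top A HA), hyx.
  - apply (plus_le_of_join_top A HA), hpyx.
  - apply (plus_le_of_join_top A HA), hpxy.
Qed.

Lemma eq_indicator_refl n x : eq_indicator A n x x = ⊤.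
Proof. unfold eq_indicator. rewrite sp_agree_refl. apply (plus_star_iter_top A HA). Qed.

Lemma simple_eq_indicator_neq n x y :
  simple_alg A -> plus_star_stable A n -> x <> y -> eq_indicator A n x y = ⊥.
Proof.
  intros hs hn hxy. unfold eq_indicator. set (w := sp_agree A x y).
  assert (hfix : (plus_star_iter A n w)^+^* = plus_star_iter A n w) by (symmetry; apply hn).
  assert (hbot : plus_star_iter A n w ⊓ (plus_star_iter A n w)^+ = ⊥).
  { rewrite <- hfix at 1. rewrite (meet_comm A HA). apply (meet_star A HA). }
  destruct (simple_meet_kernel A HA _ hs hbot) as [e | e]; [exact e|].
  exfalso. apply hxy.
  assert (hw : w = ⊤) by (apply (top_le_eq A HA); rewrite <- e; apply (plus_star_iter_le A HA)).
  destruct (sp_agree_top x y hw). now apply (simple_sp_kernel A HA).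
Qed.

End Indicator.

Lemma simple_generators_discriminator (V : aclass) :
  (forall A, V A -> is_ddpa A) -> finitely_generated V ->
  (exists L : list alg, (forall A, In A L -> simple_alg A) /\ generated_by L V) ->
  discriminator_variety V.
Proof.
  intros hd hfg [L [hLs hL]].
  destruct (plus_star_iter_stable_variety V hd hfg) as [n hn].
  set (q := eq_indicator_term n (@TVar var3 vx) (TVar vy)).
  assert (hLV : forall B, In B L -> V B) by apply hL.
  assert (hcompl : forall A, V A -> satisfies (TJoin q (TStar q)) TOne A).
  { apply (generated_by_satisfies L V _ _ hL). intros B hB env.
    pose proof (hd B (hLV B hB)) as HB.
    unfold q. simpl. rewrite eval_eq_indicator_term. simpl.
    destruct (classic (env vx = env vy)) as [-> | ne].
    - rewrite (eq_indicator_refl B HB), (star_top B HB). apply (join_bot B HB).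
    - rewrite (simple_eq_indicator_neq B HB n _ _ (hLs B hB) (hn B (hLV B hB)) ne), (star_bot B HB).
      apply (bot_join B HB). }
  assert (hsep : forall A, V A -> satisfies (TMeet q (TVar vx)) (TMeet q (TVar vy)) A).
  { apply (generated_by_satisfies L V _ _ hL). intros B hB env.
    pose proof (hd B (hLV B hB)) as HB.
    unfold q. simpl. rewrite eval_eq_indicator_term. simpl.
    destruct (classic (env vx = env vy)) as [-> | ne]; [reflexivity|].
    rewrite (simple_eq_indicator_neq B HB n _ _ (hLs B hB) (hn B (hLV B hB)) ne), !(bot_meet B HB).
    reflexivity. }
  exists (disc_term n). intros A hA hsi x y z.
  pose proof (hd A hA) as HA.
  specialize (hcompl A hA (env3 A x y z)). specialize (hsep A hA (env3 A x y z)).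
  unfold disc_term, q in *. simpl in *. rewrite !eval_eq_indicator_term in *. simpl in *.
  split.
  - intro hxy. destruct (si_star_complemented A HA _ hsi hcompl) as [e | e]; rewrite e in *.
    + rewrite (bot_meet A HA), (star_bot A HA), (top_meet A HA). apply (bot_join A HA).
    + rewrite !(top_meet A HA) in hsep. contradiction.
  - intros <-. rewrite (eq_indicator_refl A HA), (star_top A HA), (top_meet A HA), (bot_meet A HA).
    apply (join_bot A HA).
Qed.

Theorem corollary4p2 (V : aclass) :
  is_variety V ->
  (forall A, V A -> is_ddpa A) ->
  finitely_generated V ->
  (discriminator_variety V <->
   exists L : list alg, (forall A, In A L -> simple_alg A) /\ generated_by L V).
Proof.
  intros hV hd hfg. split.
  - exact (discriminator_generated_by_simples V hV hfg).
  - exact (simple_generators_discriminator V hd hfg).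
Qed.
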